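(* Let $\alpha\in(0,1]$, let $\mathbb X$ be a finite-dimensional real Hilbert space, and let $\mathfrak D\subseteq\mathbb X$ be a closed convex set that is $C^{1,\alpha}$-cone reducible at $\hat x\in\mathfrak D$. Let $\hat y\in\mathcal N_{\mathfrak D}(\hat x)$. Then there exist $\hat\rho>0$, $\hat\delta>0$ and $\hat\kappa>0$ such that $$\mathcal N_{\mathfrak D}(x)\cap B(\hat y,\hat\delta)\subseteq\mathcal N_{\mathfrak D}(\hat x)+\hat\kappa\|x-\hat x\|^\alpha B(0,1)\quad\text{for all }x\in B(\hat x,\hat\rho).$$
   Context: $B(x,\eta):=\{u:\|u-x\|\le\eta\}$. For a closed convex set $\mathfrak D$, $\mathcal N_{\mathfrak D}(x):=\{v:\langle v,u-x\rangle\le0\ \forall u\in\mathfrak D\}$ if $x\in\mathfrak D$ (and $\emptyset$ otherwise). Definition ($C^{1,\alpha}$-cone reducibility): for $\alpha\in(0,1]$, a closed set $\mathfrak D\subseteq\mathbb X$ is $C^{1,\alpha}$-cone reducible at $\hat x\in\mathfrak D$ if there exist $\rho>0$, a closed convex pointed cone $K$ in a finite-dimensional Hilbert space $\mathbb Y$, and a mapping $\Xi:\mathbb X\to\mathbb Y$ with $\Xi(\hat x)=0$ that is continuously differentiable on $B(\hat x,\rho)$, such that the derivative $D\Xi(\hat x)$ is surjective, the mapping $x\mapsto D\Xi(x)$ is $\alpha$-Hölder continuous on $B(\hat x,\rho)$, and $\mathfrak D\cap B(\hat x,\rho)=\{x:\Xi(x)\in K\}\cap B(\hat x,\rho)$.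 $\mathfrak D$ is $C^{1,\alpha}$-cone reducible if it is so at every point of $\mathfrak D$. *)

From HB Require Import structures.
From mathcomp Require Import all_boot all_order all_algebra.
From mathcomp Require Import all_classical all_reals all_analysis.
Set Implicit Arguments. Unset Strict Implicit. Unset Printing Implicit Defensive.
Import Order.TTheory GRing.Theory Num.Theory.
Import numFieldNormedType.Exports.
Local Open Scope classical_set_scope.
Local Open Scope ring_scope.

Section Defs.
Variable R : realType.

Definition dotv {n : nat} (u v : 'rV[R]_n) : R := (u *m v^T) 0 0.
Definition enorm {n : nat} (u : 'rV[R]_n) : R := Num.sqrt (dotv u u).

Definition eball {n : nat} (x : 'rV[R]_n) (eta : R) : set 'rV[R]_n :=
  [set u | enorm (u - x) <= eta].

Definition closed_convex_pointed_cone {m : nat} (K : set 'rV[R]_m) : Prop :=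
  closed K /\ convex_set (K : set 'rV[R]_m) /\ K 0 /\
  (forall t u, 0 <= t -> K u -> K (t *: u)) /\
  (forall u, K u -> K (- u) -> u = 0).

(* normal cone of a convex set: empty outside D *)
Definition normal_cone {n : nat} (D : set 'rV[R]_n) (x : 'rV[R]_n) : set 'rV[R]_n :=
  [set v | D x /\ forall u, D u -> dotv v (u - x) <= 0].

(* Xi has Frechet derivative DXi x at x (derivative acting on row vectors
   as h |-> h *m DXi x) *)
Definition has_deriv_at {n m : nat} (Xi : 'rV[R]_n -> 'rV[R]_m)
  (A : 'M[R]_(n, m)) (x : 'rV[R]_n) : Prop :=
  forall eps : R, 0 < eps -> exists d : R, 0 < d /\
    forall h : 'rV[R]_n, enorm h < d ->
      enorm (Xi (x + h) - Xi x - h *m A) <= eps * enorm h.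

Definition C1alpha_cone_reducible_at {n : nat} (alpha : R)
  (D : set 'rV[R]_n) (xh : 'rV[R]_n) : Prop :=
  exists (rho : R) (m : nat) (K : set 'rV[R]_m)
         (Xi : 'rV[R]_n -> 'rV[R]_m) (DXi : 'rV[R]_n -> 'M[R]_(n, m)),
    0 < rho /\ closed_convex_pointed_cone K /\ Xi xh = 0 /\
    (forall x, eball xh rho x -> has_deriv_at Xi (DXi x) x) /\
    {within eball xh rho, continuous DXi} /\
    (forall w : 'rV[R]_m, exists h : 'rV[R]_n, h *m DXi xh = w) /\
    (exists L : R, forall x y, eball xh rho x -> eball xh rho y ->
       forall h : 'rV[R]_n,
         enorm (h *m (DXi x - DXi y)) <= L * enorm (x - y) `^ alpha * enorm h) /\
    (D `&` eball xh rho = [set x | K (Xi x)] `&` eball xh rho).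

End Defs.

From HB Require Import structures.
From mathcomp Require Import all_boot all_order all_algebra.
From mathcomp Require Import all_classical all_reals all_analysis.
From mathcomp Require Import ring lra.
Import Order.TTheory GRing.Theory Num.Theory.
Import numFieldNormedType.Exports.
Local Open Scope classical_set_scope.
Local Open Scope ring_scope.

(* Let A = DXi xh and B a right inverse of A.  By the Hoelder bound, DXi x
   stays within eta of A near xh, where eta * |B| <= 1/2; a chord iteration
   with the frozen pair (A, B) then solves Xi d = w near any z with Xi z close
   to w.  Hence if y is normal to D at x and h *m DXi x lies in K, a step along
   h corrected back into D shows <y, h> <= 0.  As B *m DXi x is invertible,
   this factors y = lam *m (DXi x)^T with lam in the polar of K and
   |lam| <= 2 |B^T| |y|.  Then u = lam *m A^T is normal to D at xh and
   |y - u| = |lam *m (DXi x - A)^T| <= L |x - xh|^alpha |lam|. *)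

HB.instance Definition _ (R : realType) (p q : nat) := Complete.on 'M[R]_(p, q).

Section Euclid.
Context {R : realType} {n : nat}.
Implicit Types (a c : R) (u v w : 'rV[R]_n).

Lemma dotvE u v : dotv u v = \sum_j u 0 j * v 0 j.
Proof. by rewrite /dotv !mxE; apply: eq_bigr => j _; rewrite mxE. Qed.

Lemma dotvC u v : dotv u v = dotv v u.
Proof. by rewrite !dotvE; apply: eq_bigr => j _; rewrite mulrC. Qed.

Lemma dotvDl u v w : dotv (u + v) w = dotv u w + dotv v w.
Proof. by rewrite !dotvE -big_split; apply: eq_bigr => j _; rewrite mxE mulrDl. Qed.

Lemma dotvZl a u w : dotv (a *: u) w = a * dotv u w.
Proof. by rewrite !dotvE mulr_sumr; apply: eq_bigr => j _; rewrite mxE mulrA. Qed.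

Lemma dotvNl u w : dotv (- u) w = - dotv u w.
Proof. by rewrite -scaleN1r dotvZl mulN1r. Qed.

Lemma dotvBl u v w : dotv (u - v) w = dotv u w - dotv v w.
Proof. by rewrite dotvDl dotvNl. Qed.

Lemma dotvDr u v w : dotv w (u + v) = dotv w u + dotv w v.
Proof. by rewrite dotvC dotvDl !(dotvC w). Qed.

Lemma dotvZr a u w : dotv w (a *: u) = a * dotv w u.
Proof. by rewrite dotvC dotvZl dotvC. Qed.

Lemma dotvNr u w : dotv w (- u) = - dotv w u.
Proof. by rewrite dotvC dotvNl dotvC. Qed.

Lemma dotvBr u v w : dotv w (u - v) = dotv w u - dotv w v.
Proof. by rewrite dotvDr dotvNr. Qed.

Lemma dotv0l w : dotv 0 w = 0.
Proof. by rewrite -(scale0r 0) dotvZl mul0r. Qed.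

Lemma dotv0r w : dotv w 0 = 0.
Proof. by rewrite dotvC dotv0l. Qed.

Lemma dotvv_ge0 u : 0 <= dotv u u.
Proof. by rewrite dotvE sumr_ge0 // => j _; rewrite -expr2 sqr_ge0. Qed.

Lemma dotvv_eq0 u : dotv u u = 0 -> u = 0.
Proof.
rewrite dotvE => /psumr_eq0P uu0; apply/rowP => j; apply/eqP.
by rewrite mxE -[_ == 0]orbb -mulf_eq0 uu0 // => i _; rewrite -expr2 sqr_ge0.
Qed.

Lemma dotv_mulmxl p u (N : 'M[R]_(n, p)) (v : 'rV[R]_p) :
  dotv (u *m N) v = dotv u (v *m N^T).
Proof. by rewrite /dotv trmx_mul trmxK mulmxA. Qed.

Lemma enorm_ge0 u : 0 <= enorm u.
Proof. exact: sqrtr_ge0. Qed.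

Lemma enorm_sqr u : enorm u ^+ 2 = dotv u u.
Proof. by rewrite /enorm sqr_sqrtr // dotvv_ge0. Qed.

Lemma enorm_eq0 u : enorm u = 0 -> u = 0.
Proof. by move=> u0; apply: dotvv_eq0; rewrite -enorm_sqr u0 expr0n. Qed.

Lemma enorm0 : enorm (0 : 'rV[R]_n) = 0.
Proof. by rewrite /enorm dotv0l sqrtr0. Qed.

Lemma enormZ a u : enorm (a *: u) = `|a| * enorm u.
Proof.
by rewrite /enorm dotvZl dotvZr mulrA -expr2 sqrtrM ?sqr_ge0 // sqrtr_sqr.
Qed.

Lemma enormN u : enorm (- u) = enorm u.
Proof. by rewrite -scaleN1r enormZ normrN normr1 mul1r. Qed.

Lemma enorm_distC u v : enorm (u - v) = enorm (v - u).
Proof. by rewrite -enormN opprB. Qed.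

Lemma enorm_le_eps_eq0 u : (forall e : R, 0 < e -> enorm u <= e) -> u = 0.
Proof.
move=> small; apply: enorm_eq0; apply/le_anti; rewrite enorm_ge0 andbT.
by apply/ler_addgt0Pr => e e0; rewrite add0r small.
Qed.

Lemma cauchy_schwarz u v : dotv u v ^+ 2 <= dotv u u * dotv v v.
Proof.
have [v0|vv_neq0] := eqVneq (dotv v v) 0.
  by rewrite (dotvv_eq0 _ v0) dotv0r dotv0l expr0n mulr0.
have vv_gt0 : 0 < dotv v v by rewrite lt_neqAle eq_sym vv_neq0 dotvv_ge0.
(* expand 0 <= |u - t v|^2 at the minimiser t = <u,v> / <v,v> *)
have := dotvv_ge0 (u - (dotv u v / dotv v v) *: v).
rewrite !(dotvBl, dotvBr, dotvZl, dotvZr) (dotvC v u) mulfVK ?gt_eqF //.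
rewrite subrr mulr0 subr0 => /(mulr_ge0 (ltW vv_gt0)).
have -> : dotv v v * (dotv u u - dotv u v / dotv v v * dotv u v)
          = dotv u u * dotv v v - dotv u v ^+ 2 by field; rewrite gt_eqF.
by rewrite subr_ge0.
Qed.

Lemma ler_norm_dotv u v : `|dotv u v| <= enorm u * enorm v.
Proof.
rewrite -(@ler_pXn2r _ 2) ?nnegrE ?mulr_ge0 ?enorm_ge0 //.
by rewrite real_normK ?num_real // exprMn !enorm_sqr cauchy_schwarz.
Qed.

Lemma ler_dotv u v : dotv u v <= enorm u * enorm v.
Proof. exact: le_trans (real_ler_norm (num_real _)) (ler_norm_dotv u v). Qed.

Lemma ler_enormD u v : enorm (u + v) <= enorm u + enorm v.
Proof.
rewrite -(@ler_pXn2r _ 2) ?nnegrE ?addr_ge0 ?enorm_ge0 //.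
rewrite enorm_sqr dotvDl !dotvDr sqrrD !enorm_sqr (dotvC v u).
have := ler_dotv u v; rewrite mulr2n; lra.
Qed.

Lemma ler_enorm_distD u v w : enorm (u - w) <= enorm (u - v) + enorm (v - w).
Proof. by rewrite -[u - w](subrKA v) ler_enormD. Qed.

Lemma ler_enorm_dist_dist u v : `|enorm u - enorm v| <= enorm (u - v).
Proof.
have := ler_enorm_distD u v 0; have := ler_enorm_distD v u 0.
rewrite !subr0 (enorm_distC v) ler_norml; lra.
Qed.

Lemma ler_enorm_sum (I : finType) (F : I -> 'rV[R]_n) :
  enorm (\sum_i F i) <= \sum_i enorm (F i).
Proof.
elim/big_ind2: _ => [|u1 u2 a1 a2 le1 le2|//]; first by rewrite enorm0.
exact: le_trans (ler_enormD _ _) (lerD le1 le2).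
Qed.

Lemma enorm_le_dot v c : 0 <= c ->
  (forall h, dotv v h <= c * enorm h) -> enorm v <= c.
Proof.
move=> c0 /(_ v); rewrite -enorm_sqr expr2.
have [->|v_neq0] := eqVneq (enorm v) 0; first by [].
by rewrite ler_pM2r // lt_neqAle eq_sym v_neq0 enorm_ge0.
Qed.

Lemma ler_entry_enorm u j : `|u 0 j| <= enorm u.
Proof.
rewrite -(@ler_pXn2r _ 2) ?nnegrE ?enorm_ge0 // enorm_sqr dotvE.
rewrite real_normK ?num_real // (bigD1 j) //= -expr2 lerDl.
by rewrite sumr_ge0 // => i _; rewrite -expr2 sqr_ge0.
Qed.

Lemma mx_norm_le_enorm u : `|u| <= enorm u.
Proof.
rewrite [`|u|]mx_normrE; apply/bigmax_leP; split; first exact: enorm_ge0.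
by move=> [i j] _ /=; rewrite (ord1 i) ler_entry_enorm.
Qed.

Lemma enorm_le_mx_norm u : enorm u <= n%:R * `|u|.
Proof.
rewrite {1}(row_sum_delta u); apply: le_trans; first exact: ler_enorm_sum.
rewrite -[n in n%:R]card_ord -sumr_const mulr_suml; apply: ler_sum => j _.
rewrite enormZ mul1r; have -> : enorm (delta_mx 0 j : 'rV[R]_n) = 1.
  rewrite /enorm dotvE (bigD1 j) //= !mxE !eqxx mulr1 big1 ?addr0 ?sqrtr1 //.
  by move=> i /negbTE ij; rewrite !mxE ij mulr0.
rewrite mulr1 [`|u|]mx_normrE.
by apply/bigmax_geP; right; exists (0, j).
Qed.

Lemma cvg_enorm {u : nat -> 'rV[R]_n} {l : 'rV[R]_n} {e : R} : u @ \oo --> l ->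
  0 < e -> exists N, forall k, (N <= k)%N -> enorm (u k - l) < e.
Proof.
move=> /cvgrPdist_lt ul e0.
have [N _ closeN] := ul (e / (n%:R + 1)) (divr_gt0 e0 (ltr_wpDl (ler0n _ n) ltr01)).
exists N => k /closeN /= lt_e; rewrite enorm_distC.
apply: le_lt_trans (enorm_le_mx_norm _) _.
apply: le_lt_trans (ler_wpM2l (ler0n _ _) (ltW lt_e)) _.
by rewrite mulrC -mulrA gtr_pMr // ltr_pdivrMl ?ltr_wpDl // mulr1 ltrDl.
Qed.

End Euclid.

Section MatrixBound.
Context {R : realType} {p q : nat}.
Implicit Types (N : 'M[R]_(p, q)).

Definition mxbound N : R := 1 + \sum_i enorm (row i N).

Lemma mxbound_gt0 N : 0 < mxbound N.
Proof. by rewrite ltr_wpDr // sumr_ge0 // => i _; exact: enorm_ge0. Qed.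

Lemma mxbound_ge0 N : 0 <= mxbound N.
Proof. exact/ltW/mxbound_gt0. Qed.

Lemma enorm_mulmx_le (v : 'rV[R]_p) N : enorm (v *m N) <= mxbound N * enorm v.
Proof.
rewrite mulmx_sum_row; apply: le_trans; first exact: ler_enorm_sum.
rewrite mulrDl mul1r; apply: ler_wpDl; first exact: enorm_ge0.
rewrite mulr_suml; apply: ler_sum => i _; rewrite enormZ mulrC.
by rewrite ler_wpM2l ?enorm_ge0 ?ler_entry_enorm.
Qed.

Lemma enorm_mulmx_tr_le N c : 0 <= c ->
    (forall k : 'rV[R]_p, enorm (k *m N) <= c * enorm k) ->
  forall v : 'rV[R]_q, enorm (v *m N^T) <= c * enorm v.
Proof.
move=> c0 le_c v; apply: enorm_le_dot => [|h]; first by rewrite mulr_ge0 ?enorm_ge0.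
rewrite dotv_mulmxl trmxK; apply: le_trans (ler_dotv _ _) _.
by rewrite (mulrC c) -mulrA ler_wpM2l ?enorm_ge0.
Qed.

End MatrixBound.

Section RealBounds.
Context {R : realType}.

Lemma le0_eps_mul (a C : R) : (forall e, 0 < e -> a <= e * C) -> a <= 0.
Proof.
move=> small; apply/ler_addgt0Pr => e e0; rewrite add0r.
have C1_gt0 : 0 < `|C| + 1 by rewrite ltr_wpDl.
apply: le_trans (small _ (divr_gt0 e0 C1_gt0)) _.
rewrite -[leRHS](divfK (lt0r_neq0 C1_gt0)) ler_wpM2l ?divr_ge0 ?ltW //.
by have := ler_norm C; lra.
Qed.

Lemma le_powR_of_le_root (alpha a b : R) :
  0 < alpha -> 0 <= a -> 0 <= b -> a <= b `^ alpha^-1 -> a `^ alpha <= b.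
Proof.
move=> alpha_gt0 a0 b0 le_ab.
have := ge0_ler_powR (ltW alpha_gt0) _ _ le_ab; rewrite -powRrM mulVf ?gt_eqF //.
by rewrite powRr1 //; apply; rewrite nnegrE ?powR_ge0.
Qed.

End RealBounds.

Section MeanValue.
Context {R : realType}.

(* Continuous induction: the supremum of [t | f t <= (K + e) t] in [0, 1] is
   attained by continuity, and the local bound pushes it beyond any t < 1. *)
Lemma local_lipschitz_le01 (f : R -> R) (K : R) : f 0 = 0 ->
  (forall t, 0 <= t -> t <= 1 -> forall e, 0 < e -> exists2 d, 0 < d &
     forall s, 0 <= s -> s <= 1 -> `|s - t| < d ->
       `|f s - f t| <= (K + e) * `|s - t|) ->
  f 1 <= K.
Proof.
move=> f0 loc; apply/ler_addgt0Pr => e e0.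
pose A := [set t : R | 0 <= t /\ t <= 1 /\ f t <= (K + e) * t].
have A0 : A 0 by rewrite /A /= lexx ler01 f0 mulr0.
have ubA : ubound A 1 by move=> t [_ []].
have supA : has_sup A by split; [exists 0 | exists 1].
set T := sup A.
have T0 : 0 <= T by exact: (sup_upper_bound supA A0).
have T1 : T <= 1 by exact: (ge_sup (ex_intro _ 0 A0) ubA).
have [d d0 locT] := loc T T0 T1 e e0.
have AT : A T.
  have [t At lt_tT] : exists2 t, A t & T - d < t := sup_adherent d0 supA.
  have le_tT : t <= T by exact: (sup_upper_bound supA At).
  case: At => t0 [t1 ft].
  have := locT t t0 t1; rewrite distrC ger0_norm ?subr_ge0 // mulrBr.
  move=> /(_ ltac:(lra)) loc_t; have := ler_norm (f T - f t); rewrite distrC.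
  by split; [done | split; [done | lra]].
have [T_eq1|T_neq1] := eqVneq T 1; first by case: AT => _ [_]; rewrite T_eq1 mulr1.
have T_lt1 : T < 1 by rewrite lt_neqAle T_neq1 T1.
pose s := Num.min 1 (T + d / 2).
have lt_Ts : T < s by rewrite /s lt_min T_lt1 /=; lra.
have s1 : s <= 1 by rewrite /s ge_min lexx.
have sTd : s <= T + d / 2 by rewrite /s ge_min lexx orbT.
have As : A s.
  have := locT s ltac:(lra) s1; rewrite gtr0_norm ?subr_gt0 // mulrBr.
  move=> /(_ ltac:(lra)) loc_s; have := ler_norm (f s - f T).
  by case: AT => _ [_ fT]; split; [lra | split; [done | lra]].
have : s <= T by exact: (sup_upper_bound supA As).
lra.
Qed.

Lemma segment_in_ball {n} (c a b : 'rV[R]_n) r :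
  enorm (a - c) <= r -> enorm (b - c) <= r ->
  forall t, 0 <= t -> t <= 1 -> enorm (b + t *: (a - b) - c) <= r.
Proof.
move=> ac bc t t0 t1.
have -> : b + t *: (a - b) - c = t *: (a - c) + (1 - t) *: (b - c).
  by apply/rowP => j; rewrite !mxE; ring.
apply: le_trans (ler_enormD _ _) _; rewrite !enormZ !ger0_norm ?subr_ge0 //.
have := ler_wpM2l t0 ac; have := ler_wpM2l (ltac:(lra) : 0 <= 1 - t) bc.
lra.
Qed.

Lemma mean_value_ineq {n m} {Xi : 'rV[R]_n -> 'rV[R]_m} {J : 'rV[R]_n -> 'M[R]_(n, m)}
    {A : 'M[R]_(n, m)} {S : set 'rV[R]_n} {eta : R} {a b : 'rV[R]_n} :
  (forall t, 0 <= t -> t <= 1 -> S (b + t *: (a - b))) ->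
  (forall z, S z -> has_deriv_at Xi (J z) z) ->
  (forall z h, S z -> enorm (h *m (J z - A)) <= eta * enorm h) ->
  enorm (Xi a - Xi b - (a - b) *m A) <= eta * enorm (a - b).
Proof.
move=> segS derivJ J_near; set p := a - b.
pose g t := Xi (b + t *: p) - t *: (p *m A).
pose f t := enorm (g t - g 0).
have -> : Xi a - Xi b - p *m A = g 1 - g 0.
  by rewrite /g !scale1r !scale0r addr0 subr0 /p subrKC addrAC.
apply: (@local_lipschitz_le01 f) => [|t t0 t1 e e0]; first by rewrite /f subrr enorm0.
have p1_gt0 : 0 < enorm p + 1 by rewrite ltr_wpDl ?enorm_ge0.
have [d [d0 remJ]] := derivJ _ (segS t t0 t1) _ (divr_gt0 e0 p1_gt0).
exists (d / (enorm p + 1)); first by rewrite divr_gt0.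
move=> s s0 s1 st; set c := b + t *: p; set h := (s - t) *: p.
have enorm_h : enorm h = `|s - t| * enorm p by rewrite enormZ.
have h_lt_d : enorm h < d.
  rewrite enorm_h; apply: (le_lt_trans (y := d / (enorm p + 1) * enorm p)).
    by rewrite ler_wpM2r ?enorm_ge0 // ltW.
  rewrite mulrAC ltr_pdivrMr // ltr_pM2l //; lra.
have g_incr : g s - g t = (Xi (c + h) - Xi c - h *m J c) + h *m (J c - A).
  have -> : c + h = b + s *: p by rewrite /c /h -addrA -scalerDl (addrC t) subrK.
  rewrite mulmxBr addrA subrK /g -/c -scalemxAl scalerBl.
  by apply/rowP => j; rewrite !mxE; ring.
have : `|f s - f t| <= enorm (g s - g t).
  rewrite /f; move: (g s) (g t) (g 0) => u v w.
  by apply: le_trans (ler_enorm_dist_dist _ _) _; rewrite opprB addrA subrK.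
move=> /le_trans; apply; rewrite g_incr; apply: le_trans (ler_enormD _ _) _.
apply: le_trans (lerD (remJ h h_lt_d) (J_near c h (segS t t0 t1))) _.
rewrite -mulrDl enorm_h mulrA [_ * `|s - t|]mulrC -mulrA [X in _ <= X]mulrC.
rewrite ler_wpM2l // mulrDl addrC lerD2l mulrAC ler_pdivrMr // ler_pM2l //; lra.
Qed.

End MeanValue.

Section LocalSolvability.
Context {R : realType} {n m : nat}.
Context {Xi : 'rV[R]_n -> 'rV[R]_m} {J : 'rV[R]_n -> 'M[R]_(n, m)}.
Context {A : 'M[R]_(n, m)} {B : 'M[R]_(m, n)} {c : 'rV[R]_n} {r eta : R}.
Hypotheses (eta_ge0 : 0 <= eta) (eta_mxbound : eta * mxbound B <= 2^-1).
Hypothesis BA : B *m A = 1%:M.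
Hypothesis derivJ : forall z, enorm (z - c) <= r -> has_deriv_at Xi (J z) z.
Hypothesis J_near : forall z h, enorm (z - c) <= r ->
  enorm (h *m (J z - A)) <= eta * enorm h.

Lemma increment_near a b : enorm (a - c) <= r -> enorm (b - c) <= r ->
  enorm (Xi a - Xi b - (a - b) *m A) <= eta * enorm (a - b).
Proof.
move=> ac bc; apply: (mean_value_ineq (S := [set z | enorm (z - c) <= r])).
- by move=> t t0 t1; exact: segment_in_ball.
- exact: derivJ.
- exact: J_near.
Qed.

Lemma lipschitz_near a b : enorm (a - c) <= r -> enorm (b - c) <= r ->
  enorm (Xi a - Xi b) <= (eta + mxbound A) * enorm (a - b).
Proof.
move=> ac bc; rewrite -[Xi a - Xi b](subrK ((a - b) *m A)) mulrDl.
exact: le_trans (ler_enormD _ _) (lerD (increment_near _ _ ac bc) (enorm_mulmx_le _ _)).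
Qed.

Context {z : 'rV[R]_n} {w : 'rV[R]_m}.
Hypotheses (zc : enorm (z - c) <= r / 2)
           (wz : 2 * mxbound B * enorm (w - Xi z) <= r / 2).

Let e0 := enorm (w - Xi z).
Let v_ k := iter k (fun v => v + (w - Xi (z + v *m B))) 0.
Let res k := w - Xi (z + v_ k *m B).

Lemma iterate_in_ball v : enorm v <= 2 * e0 -> enorm (z + v *m B - c) <= r.
Proof.
move=> ve; rewrite addrAC; apply: le_trans (ler_enormD _ _) _.
have := zc; have := wz; rewrite -/e0; have := enorm_mulmx_le v B.
have := ler_wpM2l (mxbound_ge0 B) ve; lra.
Qed.

(* Since B is a right inverse of A, each step cancels the linear part of the
   residual, so the residuals decay geometrically with ratio eta * mxbound B. *)
Lemma iterate_bound k :
  enorm (v_ k) <= 2 * e0 * (1 - 2^-1 ^+ k) /\ enorm (res k) <= 2^-1 ^+ k * e0.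
Proof.
elim: k => [|k [vk resk]].
  by rewrite /res /= mul0mx addr0 expr0 subrr mulr0 mul1r enorm0 lexx.
have q_ge0 : 0 <= 2^-1 ^+ k :> R by rewrite exprn_ge0.
have vkS : v_ k.+1 = v_ k + res k by [].
have vSk : enorm (v_ k.+1) <= 2 * e0 * (1 - 2^-1 ^+ k.+1).
  rewrite vkS exprSr; apply: le_trans (ler_enormD _ _) _; nra.
split => //.
set d0 := z + v_ k *m B; set d1 := z + v_ k.+1 *m B.
have d10 : d1 - d0 = res k *m B.
  by rewrite /d1 /d0 vkS mulmxDl opprD addrACA subrr add0r addrAC subrr add0r.
have resS : res k.+1 = - (Xi d1 - Xi d0 - (d1 - d0) *m A).
  rewrite d10 -mulmxA BA mulmx1 /res -/d1 /res -/d0 opprB.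
  by apply/rowP => j; rewrite !mxE; ring.
have e0_ge0 : 0 <= e0 := enorm_ge0 _.
have d0_in : enorm (d0 - c) <= r.
  by apply: iterate_in_ball; apply: le_trans vk _; nra.
have d1_in : enorm (d1 - c) <= r.
  by apply: iterate_in_ball; apply: le_trans vSk _; rewrite exprSr; nra.
rewrite resS enormN; apply: le_trans (increment_near _ _ d1_in d0_in) _.
rewrite d10; apply: le_trans (ler_wpM2l eta_ge0 (enorm_mulmx_le _ _)) _.
rewrite mulrA exprSr; have := ler_wpM2l (mulr_ge0 eta_ge0 (mxbound_ge0 B)) resk.
have := ler_wpM2r (mulr_ge0 q_ge0 e0_ge0) eta_mxbound; lra.
Qed.

Lemma enorm_iterate_le k : enorm (v_ k) <= 2 * e0.
Proof.
have [vk _] := iterate_bound k; apply: le_trans vk _.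
have q_ge0 : 0 <= 2^-1 ^+ k :> R by rewrite exprn_ge0.
have q_le1 : 2^-1 ^+ k <= 1 :> R by rewrite exprn_ile1 // invf_le1 // ler1n.
have : 0 <= e0 := enorm_ge0 _; nra.
Qed.

Let v_lim := limn v_.

Lemma iterate_cvg : v_ @ \oo --> v_lim.
Proof.
rewrite /v_lim; have -> : v_ = series res.
  apply: funext; elim => [|k IHk]; first by rewrite /series /= big_geq.
  by rewrite seriesSr -IHk.
apply: normed_cvg; apply: (@series_le_cvg _ _ (geometric e0 2^-1)).
- by move=> k /=; exact: normr_ge0.
- by move=> k /=; rewrite mulr_ge0 ?exprn_ge0 ?invr_ge0 ?enorm_ge0.
- move=> k /=; apply: le_trans (mx_norm_le_enorm _) _.
  by have [_] := iterate_bound k; rewrite mulrC.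
- by apply: is_cvg_geometric_series; rewrite ger0_norm ?invr_ge0 // invf_lt1 // ltr1n.
Qed.

Lemma enorm_lim_le : enorm v_lim <= 2 * e0.
Proof.
apply/ler_addgt0Pr => e e_gt0.
have [N closeN] := cvg_enorm iterate_cvg e_gt0.
have := ler_enorm_distD v_lim (v_ N) 0; rewrite !subr0 enorm_distC.
have := closeN N (leqnn N); have := enorm_iterate_le N; lra.
Qed.

Lemma Xi_iterate_lim : Xi (z + v_lim *m B) = w.
Proof.
set d := z + v_lim *m B; apply/eqP; rewrite eq_sym -subr_eq0; apply/eqP.
apply: enorm_le_eps_eq0 => e e_gt0.
set Lip := eta + mxbound A.
have Lip_ge0 : 0 <= Lip := addr_ge0 eta_ge0 (mxbound_ge0 A).
set C := 2 + Lip * mxbound B.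
have C_gt0 : 0 < C by rewrite /C; have := mulr_ge0 Lip_ge0 (mxbound_ge0 B); lra.
have [N closeN] := cvg_enorm iterate_cvg (divr_gt0 e_gt0 C_gt0).
have closeN0 := ltW (closeN N (leqnn N)); have closeN1 := ltW (closeN N.+1 (leqnSn N)).
have res_le : enorm (res N) <= enorm (v_ N.+1 - v_lim) + enorm (v_ N - v_lim).
  rewrite (enorm_distC (v_ N)); apply: le_trans (ler_enorm_distD _ v_lim _).
  by rewrite [v_ N.+1]/= addrAC subrr add0r.
have Xi_le : enorm (Xi (z + v_ N *m B) - Xi d) <= Lip * mxbound B * (e / C).
  have vN_in := iterate_in_ball _ (enorm_iterate_le N).
  have lim_in := iterate_in_ball _ enorm_lim_le.
  apply: le_trans (lipschitz_near _ _ vN_in lim_in) _.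
  rewrite -/Lip -mulrA; apply: ler_wpM2l => //.
  rewrite (addrC z) addrKA -mulmxBl; apply: le_trans (enorm_mulmx_le _ _) _.
  by apply: ler_wpM2l; [exact: mxbound_ge0 | exact: closeN0].
have -> : e = e / C + e / C + Lip * mxbound B * (e / C).
  by rewrite /C; field; rewrite -/C gt_eqF.
apply: le_trans (ler_enorm_distD w (Xi (z + v_ N *m B)) (Xi d)) _.
rewrite -/(res N); lra.
Qed.

Lemma local_solvability :
  exists d, Xi d = w /\ enorm (d - z) <= 2 * mxbound B * enorm (w - Xi z).
Proof.
exists (z + v_lim *m B); split; first exact: Xi_iterate_lim.
rewrite addrAC subrr add0r; apply: le_trans (enorm_mulmx_le _ _) _.
rewrite [2 * _]mulrC -mulrA.
by apply: ler_wpM2l; [exact: mxbound_ge0 | exact: enorm_lim_le].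
Qed.

End LocalSolvability.

Section ConvexGeometry.
Context {R : realType} {n : nat}.
Implicit Types (D : set 'rV[R]_n) (a b u y : 'rV[R]_n).

Lemma convex_segment D a b t : convex_set D ->
  D a -> D b -> 0 <= t -> t <= 1 -> D (t *: a + (1 - t) *: b).
Proof.
move=> convD Da Db t0 t1.
by have := convD a b (Itv01 t0 t1) (mem_set Da) (mem_set Db); rewrite in_setE.
Qed.

Lemma cone_addr_closed (K : set 'rV[R]_n) : convex_set K ->
  (forall t u, 0 <= t -> K u -> K (t *: u)) -> forall a b, K a -> K b -> K (a + b).
Proof.
move=> convK scaleK a b Ka Kb.
have half_ge0 : 0 <= 2^-1 :> R by rewrite invr_ge0.
have half_le1 : 2^-1 <= 1 :> R by rewrite invf_le1 ?ler1n.
have Kmid : K (2^-1 *: a + (1 - 2^-1) *: b) by apply: convex_segment.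
have := scaleK 2 _ (ler0n _ 2) Kmid.
have -> // : 2 *: (2^-1 *: a + (1 - 2^-1) *: b) = a + b.
by apply/rowP => j; rewrite !mxE; field.
Qed.

Lemma ball_decompose {u y r} : 0 <= r -> enorm (y - u) <= r ->
  exists w, eball 0 1 w /\ y = u + r *: w.
Proof.
move=> r0 yu; have [r_eq0|r_neq0] := eqVneq r 0.
  exists 0; rewrite /eball /= subrr enorm0 ler01 scaler0 addr0; split => //.
  apply/eqP; rewrite -subr_eq0; apply/eqP/enorm_eq0/le_anti.
  by rewrite enorm_ge0 andbT -r_eq0.
exists (r^-1 *: (y - u)); rewrite /eball /= subr0 enormZ ger0_norm ?invr_ge0 //.
by rewrite mulrC ler_pdivrMr ?lt_neqAle 1?eq_sym ?r_neq0 // mul1r scalerA mulfV // scale1r subrKC.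
Qed.

Lemma deriv_small_step {m} {Xi : 'rV[R]_n -> 'rV[R]_m} {M : 'M[R]_(n, m)} {x : 'rV[R]_n}
    (p : 'rV[R]_n) {r e : R} :
  has_deriv_at Xi M x -> 0 < r -> 0 < e ->
  exists t, [/\ 0 < t, t <= 1, t * enorm p <= r &
    enorm (Xi (x + t *: p) - Xi x - t *: (p *m M)) <= e * (t * enorm p)].
Proof.
move=> derivM r0 e0; have [p0|p_neq0] := eqVneq (enorm p) 0.
  exists 1; rewrite p0 !mulr0 (enorm_eq0 _ p0) scaler0 addr0 subrr mul0mx.
  by rewrite scaler0 subr0 enorm0 ltr01 lexx ltW.
have p_gt0 : 0 < enorm p by rewrite lt_neqAle eq_sym p_neq0 enorm_ge0.
have [d [d0 remM]] := derivM e e0.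
pose t := Num.min 1 (Num.min (d / (2 * enorm p)) (r / enorm p)).
have t_gt0 : 0 < t by rewrite !lt_min ltr01 !divr_gt0 ?mulr_gt0.
have td : t * enorm p <= d / 2.
  have : t <= d / (2 * enorm p) by rewrite /t !ge_min lexx orbT.
  by rewrite invfM mulrA ler_pdivlMr.
have tr : t * enorm p <= r.
  have : t <= r / enorm p by rewrite /t !ge_min lexx !orbT.
  by rewrite ler_pdivlMr.
exists t; split => //; first by rewrite /t ge_min lexx.
have enorm_tp : enorm (t *: p) = t * enorm p by rewrite enormZ gtr0_norm.
rewrite scalemxAl -enorm_tp; apply: remM; rewrite enorm_tp; lra.
Qed.

(* Along the segment from xh towards u in D, Xi stays in K, so to first order
   t *: (u - xh) *m A lies in K and lam is nonpositive on it. *)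
Lemma normal_cone_of_polar {m} {D : set 'rV[R]_n} {K : set 'rV[R]_m}
    {Xi : 'rV[R]_n -> 'rV[R]_m} {A : 'M[R]_(n, m)} {xh : 'rV[R]_n} {rho : R}
    {lam : 'rV[R]_m} :
  0 < rho -> convex_set D -> D xh -> Xi xh = 0 -> has_deriv_at Xi A xh ->
  D `&` eball xh rho = [set x | K (Xi x)] `&` eball xh rho ->
  (forall k, K k -> dotv lam k <= 0) -> normal_cone D xh (lam *m A^T).
Proof.
move=> rho_gt0 convD Dxh Xi_xh derivA D_local lam_polar; split => // u Du.
rewrite dotv_mulmxl trmxK; set p := u - xh.
apply: (le0_eps_mul _ (enorm lam * enorm p)) => e e_gt0.
have [t [t_gt0 t1 t_rho]] := deriv_small_step p derivA rho_gt0 e_gt0.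
rewrite Xi_xh subr0; set rem := Xi _ - _ => rem_le.
have Dt : D (xh + t *: p).
  have -> : xh + t *: p = t *: u + (1 - t) *: xh.
    by rewrite /p; apply/rowP => j; rewrite !mxE; ring.
  by apply: convex_segment => //; exact: ltW.
have Bt : eball xh rho (xh + t *: p).
  by rewrite /eball /= addrAC subrr add0r enormZ gtr0_norm.
have : (D `&` eball xh rho) (xh + t *: p) by [].
rewrite D_local => -[/lam_polar]; rewrite -[Xi _](subrK (t *: (p *m A))) -/rem.
rewrite dotvDr dotvZr => lam_le _; rewrite -(ler_pM2l t_gt0).
have := ler_dotv lam (- rem); rewrite dotvNr enormN.
have := ler_wpM2l (enorm_ge0 lam) rem_le; lra.
Qed.

End ConvexGeometry.

Section LinearAlgebra.
Context {R : realType}.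

Lemma right_inverse_of_surj {n m} {A : 'M[R]_(n, m)} :
  (forall w : 'rV[R]_m, exists h : 'rV[R]_n, h *m A = w) ->
  exists B : 'M[R]_(m, n), B *m A = 1%:M.
Proof.
move=> surjA; have [f fA] := boolp.choice (fun i : 'I_m => surjA (delta_mx 0 i)).
by exists (\matrix_i f i); apply/row_matrixP => i; rewrite row_mul rowK fA row1.
Qed.

Lemma unitmx_1D {m} (E : 'M[R]_m) c : c < 1 ->
  (forall k, enorm (k *m E) <= c * enorm k) -> 1%:M + E \in unitmx.
Proof.
move=> c_lt1 Ec; rewrite -row_free_unit -kermx_eq0; apply/eqP/row_matrixP => i.
rewrite row0; set v := row i _.
have : v *m (1%:M + E) = 0 by rewrite -row_mul mulmx_ker row0.
rewrite mulmxDr mulmx1 => /eqP; rewrite addr_eq0 => /eqP vE.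
apply: enorm_eq0; apply/le_anti; rewrite enorm_ge0 andbT.
have := Ec v; rewrite -(enormN (v *m E)) -vE; have := enorm_ge0 v; nra.
Qed.

Lemma mulmx_tr_factor {n m} {M : 'M[R]_(n, m)} {C : 'M[R]_(m, n)} {y : 'rV[R]_n} :
  C *m M = 1%:M -> (forall h, h *m M = 0 -> dotv y h = 0) -> y *m C^T *m M^T = y.
Proof.
move=> CM y_ker.
have dot_eq h : dotv (y *m C^T *m M^T) h = dotv y h.
  rewrite !dotv_mulmxl !trmxK; apply/eqP; rewrite -subr_eq0 -dotvBr; apply/eqP/y_ker.
  by rewrite mulmxBl -(mulmxA (h *m M)) CM mulmx1 subrr.
by apply/eqP; rewrite -subr_eq0; apply/eqP/dotvv_eq0; rewrite dotvBl dot_eq subrr.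
Qed.

Lemma holder_const_gt0 {n m} {F : 'rV[R]_n -> 'M[R]_(n, m)} {S : set 'rV[R]_n} {alpha L : R} :
    (forall x y, S x -> S y -> forall h,
       enorm (h *m (F x - F y)) <= L * enorm (x - y) `^ alpha * enorm h) ->
  exists2 L', 0 < L' & forall x y, S x -> S y -> forall h,
       enorm (h *m (F x - F y)) <= L' * enorm (x - y) `^ alpha * enorm h.
Proof.
move=> holderF; exists (Num.max L 1); first by rewrite lt_max ltr01 orbT.
move=> x y Sx Sy h; apply: le_trans (holderF x y Sx Sy h) _.
rewrite -!mulrA; apply: ler_wpM2r; last by rewrite le_max lexx.
by rewrite mulr_ge0 ?powR_ge0 ?enorm_ge0.
Qed.

End LinearAlgebra.

Section ConeReducible.
Context {R : realType} {n m : nat}.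
Context {alpha rho L : R} {D : set 'rV[R]_n} {K : set 'rV[R]_m}.
Context {Xi : 'rV[R]_n -> 'rV[R]_m} {DXi : 'rV[R]_n -> 'M[R]_(n, m)}.
Context {B : 'M[R]_(m, n)} {xh : 'rV[R]_n}.
Hypotheses (alpha_gt0 : 0 < alpha) (rho_gt0 : 0 < rho) (L_gt0 : 0 < L).
Hypotheses (convD : convex_set D) (Dxh : D xh).
Hypotheses (convK : convex_set K) (K0 : K 0).
Hypothesis scaleK : forall t u, 0 <= t -> K u -> K (t *: u).
Hypothesis Xi_xh : Xi xh = 0.
Hypothesis derivXi : forall x, eball xh rho x -> has_deriv_at Xi (DXi x) x.
Hypothesis holderDXi : forall x y, eball xh rho x -> eball xh rho y -> forall h,
  enorm (h *m (DXi x - DXi y)) <= L * enorm (x - y) `^ alpha * enorm h.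
Hypothesis BA : B *m DXi xh = 1%:M.
Hypothesis D_local : D `&` eball xh rho = [set x | K (Xi x)] `&` eball xh rho.

Local Notation A := (DXi xh).

(* On B(xh, r0) the Hoelder bound gives |DXi x - A| <= eta, and r0 is small
   enough that eta * mxbound B <= 1/2. *)
Let r0 := Num.min rho (((2 * L * mxbound B)^-1) `^ alpha^-1).
Let eta := L * r0 `^ alpha.

Lemma r0_gt0 : 0 < r0.
Proof. by rewrite lt_min rho_gt0 powR_gt0 // invr_gt0 !mulr_gt0 ?mxbound_gt0. Qed.

Lemma r0_le_rho : r0 <= rho.
Proof. by rewrite ge_min lexx. Qed.

Lemma eta_ge0 : 0 <= eta.
Proof. by rewrite mulr_ge0 ?powR_ge0 ?ltW. Qed.

Lemma eta_mxbound : eta * mxbound B <= 2^-1.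
Proof.
have cB_gt0 := mxbound_gt0 B.
have r0_pow : r0 `^ alpha <= (2 * L * mxbound B)^-1.
  apply: le_powR_of_le_root; rewrite ?ge_min ?lexx ?orbT ?ltW ?r0_gt0 //.
  by rewrite invr_gt0 !mulr_gt0.
rewrite /eta; have := ler_wpM2r (ltW cB_gt0) (ler_wpM2l (ltW L_gt0) r0_pow).
by have -> : L * (2 * L * mxbound B)^-1 * mxbound B = 2^-1 by field; rewrite !gt_eqF.
Qed.

Lemma xh_in_ball : eball xh rho xh.
Proof. by rewrite /eball /= subrr enorm0 ltW. Qed.

Lemma DXi_near z h : enorm (z - xh) <= r0 ->
  enorm (h *m (DXi z - A)) <= eta * enorm h.
Proof.
move=> z_r0; have z_rho := le_trans z_r0 r0_le_rho.
apply: le_trans (holderDXi _ _ z_rho xh_in_ball h) _.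
apply: ler_wpM2r; first exact: enorm_ge0.
apply: ler_wpM2l; first exact: ltW.
have := ge0_ler_powR (ltW alpha_gt0) _ _ z_r0; apply; rewrite nnegrE ?enorm_ge0 //.
exact/ltW/r0_gt0.
Qed.

Lemma derivXi_near z : enorm (z - xh) <= r0 -> has_deriv_at Xi (DXi z) z.
Proof. by move=> z_r0; apply: derivXi; exact: le_trans z_r0 r0_le_rho. Qed.

Lemma D_near x : enorm (x - xh) <= rho -> D x <-> K (Xi x).
Proof.
move=> x_rho; split => [Dx | KXi].
- by have : (D `&` eball xh rho) x by []; rewrite D_local => -[].
- by have : ([set x | K (Xi x)] `&` eball xh rho) x by []; rewrite -D_local => -[].
Qed.

(* Step from x along h to first order inside K, then correct the step by
   local solvability so that it lands exactly in D. *)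
Lemma tangent_step x h e : enorm (x - xh) <= r0 / 4 -> D x -> K (h *m DXi x) ->
  0 < e -> 2 * mxbound B * e <= 2^-1 ->
  exists t d, [/\ 0 < t, D d &
    enorm (d - (x + t *: h)) <= 2 * mxbound B * e * (t * enorm h)].
Proof.
move=> x_near Dx Kh e_gt0 e_cB; have r0p := r0_gt0; have r0rho := r0_le_rho.
have x_r0 : enorm (x - xh) <= r0 by lra.
have K_Xi_x : K (Xi x) by apply/D_near => //; lra.
set cB := mxbound B in e_cB *; have cB_gt0 : 0 < cB := mxbound_gt0 B.
have [t [t_gt0 _ t_r0 rem_le]] :=
  deriv_small_step h (derivXi_near _ x_r0) (divr_gt0 r0p (ltr0Sn _ 3)) e_gt0.
set z := x + t *: h; set w := Xi x + t *: (h *m DXi x).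
have Kw : K w by apply: cone_addr_closed => //; apply: scaleK => //; exact: ltW.
have z_near : enorm (z - xh) <= r0 / 2.
  rewrite /z addrAC; apply: le_trans (ler_enormD _ _) _.
  by rewrite enormZ gtr0_norm //; lra.
have w_Xi : enorm (w - Xi z) <= e * (t * enorm h).
  by rewrite -enormN opprB /w opprD addrA.
have th_ge0 : 0 <= t * enorm h by rewrite mulr_ge0 ?enorm_ge0 ?ltW.
have cB_w : 2 * cB * enorm (w - Xi z) <= 2 * cB * e * (t * enorm h).
  by rewrite -(mulrA (2 * cB)); apply: ler_wpM2l => //; rewrite mulr_ge0 ?ltW.
have wz : 2 * cB * enorm (w - Xi z) <= r0 / 2.
  by apply: le_trans cB_w _; have := ler_wpM2r th_ge0 e_cB; lra.
have [d [Xi_d d_z]] :=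
  local_solvability eta_ge0 eta_mxbound BA derivXi_near DXi_near z_near wz.
rewrite -/cB in d_z.
have d_rho : enorm (d - xh) <= rho by have := ler_enorm_distD d z xh; lra.
exists t, d; split => //; last exact: le_trans d_z cB_w.
by apply/(D_near _ d_rho); rewrite Xi_d.
Qed.

Lemma normal_dot_le0 x y h : enorm (x - xh) <= r0 / 4 -> normal_cone D x y ->
  K (h *m DXi x) -> dotv y h <= 0.
Proof.
move=> x_near [Dx normal_y] Kh; set cB := mxbound B.
have cB_gt0 : 0 < cB := mxbound_gt0 B.
apply: (le0_eps_mul _ (2 * cB * enorm y * enorm h)) => e e_gt0.
pose e' := Num.min e (4 * cB)^-1.
have e'_gt0 : 0 < e' by rewrite lt_min e_gt0 invr_gt0 mulr_gt0.
have e'_cB : 2 * cB * e' <= 2^-1.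
  have : e' <= (4 * cB)^-1 by rewrite ge_min lexx orbT.
  rewrite -(@ler_pM2l _ (2 * cB)) ?mulr_gt0 //.
  by have -> : 2 * cB * (4 * cB)^-1 = 2^-1 by field; rewrite gt_eqF.
have [t [d [t_gt0 Dd d_near]]] := tangent_step _ _ _ x_near Dx Kh e'_gt0 e'_cB.
have := normal_y d Dd; rewrite (_ : d - x = t *: h + (d - (x + t *: h))); last first.
  by apply/rowP => j; rewrite !mxE; ring.
rewrite dotvDr dotvZr => y_le; rewrite -(ler_pM2l t_gt0).
have := ler_dotv y (- (d - (x + t *: h))); rewrite dotvNr enormN.
have d_near_e : enorm (d - (x + t *: h)) <= 2 * cB * e * (t * enorm h).
  apply: le_trans d_near _; apply: ler_wpM2r; first by rewrite mulr_ge0 ?enorm_ge0 ?ltW.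
  by apply: ler_wpM2l; [rewrite mulr_ge0 ?ltW | rewrite ge_min lexx].
have := ler_wpM2l (enorm_ge0 y) d_near_e; lra.
Qed.

(* B (DXi x) = 1 + E with |E| <= 1/2 is invertible, which yields a left inverse C
   of DXi x; y vanishes on ker (DXi x), so y = (y C^T) (DXi x)^T. *)
Lemma normal_factor x y : enorm (x - xh) <= r0 / 4 -> normal_cone D x y ->
  exists lam, [/\ lam *m (DXi x)^T = y, forall k, K k -> dotv lam k <= 0
                & enorm lam <= 2 * mxbound B^T * enorm y].
Proof.
move=> x_near normal_y; set M := DXi x.
have x_r0 : enorm (x - xh) <= r0 by have := r0_gt0; lra.
set E := B *m (M - A).
have E_le k : enorm (k *m E) <= 2^-1 * enorm k.
  rewrite mulmxA; apply: le_trans (DXi_near _ (k *m B) x_r0) _.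
  apply: le_trans (ler_wpM2l eta_ge0 (enorm_mulmx_le _ _)) _.
  by rewrite mulrA; apply: ler_wpM2r; [exact: enorm_ge0 | exact: eta_mxbound].
have BM : B *m M = 1%:M + E by rewrite /E mulmxBr BA addrC subrK.
have BM_unit : B *m M \in unitmx.
  by rewrite BM (@unitmx_1D _ _ _ 2^-1) // invf_lt1 ?ltr1n.
set C := invmx (B *m M) *m B.
have CM : C *m M = 1%:M by rewrite -mulmxA mulVmx.
have y_polar h : K (h *m M) -> dotv y h <= 0 := normal_dot_le0 _ _ _ x_near normal_y.
have y_ker h : h *m M = 0 -> dotv y h = 0.
  move=> hM; apply/le_anti; rewrite y_polar ?hM //=.
  by rewrite -oppr_le0 -dotvNr y_polar // mulNmx hM oppr0.
set lam := y *m C^T; have lamM : lam *m M^T = y := mulmx_tr_factor CM y_ker.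
exists lam; split => // [k Kk|].
  by rewrite dotv_mulmxl trmxK y_polar // -mulmxA CM mulmx1.
have lamE : lam + lam *m E^T = y *m B^T.
  by rewrite -[lam in lam + _]mulmx1 -mulmxDr -trmx1 -linearD /= -BM trmx_mul mulmxA lamM.
have := ler_enormD (y *m B^T) (- (lam *m E^T)); rewrite -{1}lamE addrK enormN.
have : enorm (lam *m E^T) <= 2^-1 * enorm lam by apply: enorm_mulmx_tr_le.
have := enorm_mulmx_le y B^T; lra.
Qed.

Lemma normal_cone_estimate (yh : 'rV[R]_n) :
  exists rhoh deltah kappah : R, 0 < rhoh /\ 0 < deltah /\ 0 < kappah /\
    forall x, eball xh rhoh x -> forall y, normal_cone D x y -> eball yh deltah y ->
      exists u w, normal_cone D xh u /\ eball 0 1 w /\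
        y = u + (kappah * enorm (x - xh) `^ alpha) *: w.
Proof.
pose kappa := 2 * mxbound B^T * (enorm yh + 1) * L.
have kappa_gt0 : 0 < kappa by rewrite !mulr_gt0 ?mxbound_gt0 ?ltr_wpDl ?enorm_ge0.
exists (r0 / 4), 1, kappa; do ![split; first by rewrite ?divr_gt0 ?r0_gt0].
move=> x x_near y normal_y y_near; rewrite /eball /= in x_near y_near.
have [lam [lamM lam_polar lam_le]] := normal_factor _ _ x_near normal_y.
set P := enorm (x - xh) `^ alpha; have P_ge0 : 0 <= P := powR_ge0 _ _.
have LP_ge0 : 0 <= L * P := mulr_ge0 (ltW L_gt0) P_ge0.
have y_u : enorm (y - lam *m A^T) <= kappa * P.
  have x_rho : enorm (x - xh) <= rho by have := r0_gt0; have := r0_le_rho; lra.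
  rewrite -{1}lamM -mulmxBr -linearB /=.
  apply: le_trans (enorm_mulmx_tr_le _ _ LP_ge0 (holderDXi _ _ x_rho xh_in_ball) _) _.
  have y_le : enorm y <= enorm yh + 1.
    by have := ler_enorm_distD y yh 0; rewrite !subr0; lra.
  have := ler_wpM2l LP_ge0 lam_le.
  have := ler_wpM2l (mulr_ge0 LP_ge0 (mulr_ge0 (ler0n _ 2) (mxbound_ge0 B^T))) y_le.
  rewrite /kappa; lra.
have [w [w1 yw]] := ball_decompose (mulr_ge0 (ltW kappa_gt0) P_ge0) y_u.
exists (lam *m A^T), w; split => //.
exact: normal_cone_of_polar rho_gt0 convD Dxh Xi_xh (derivXi _ xh_in_ball) D_local lam_polar.
Qed.

End ConeReducible.

Theorem lemma4p2 (R : realType) (n : nat) (alpha : R) (D : set 'rV[R]_n)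
  (xh yh : 'rV[R]_n) :
  0 < alpha -> alpha <= 1 ->
  closed D -> convex_set D -> D xh ->
  C1alpha_cone_reducible_at alpha D xh ->
  normal_cone D xh yh ->
  exists rhoh deltah kappah : R, 0 < rhoh /\ 0 < deltah /\ 0 < kappah /\
    forall x : 'rV[R]_n, eball xh rhoh x ->
      forall y : 'rV[R]_n, normal_cone D x y -> eball yh deltah y ->
        exists u w : 'rV[R]_n, normal_cone D xh u /\ eball 0 1 w /\
          y = u + (kappah * enorm (x - xh) `^ alpha) *: w.
Proof.
(* The estimate holds for every yh. *)
move=> alpha_gt0 _ _ convD Dxh [rho [m [K [Xi [DXi [rho_gt0 [[_ [convK [K0 [scaleK _]]]]
  [Xi_xh [derivXi [_ [surjA [[L holderL] D_local]]]]]]]]]]]] _.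
have [B BA] := right_inverse_of_surj surjA.
have [L' L'_gt0 holderDXi] := holder_const_gt0 holderL.
exact: normal_cone_estimate alpha_gt0 rho_gt0 L'_gt0 convD Dxh convK K0 scaleK
  Xi_xh derivXi holderDXi BA D_local yh.
Qed.
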